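(* Let $\mathcal C\subseteq\mathbf F_q^n$ be a formally self-orthogonal nonzero linear $[n,k,d]$ code with $2d\le n+1$. Write $p_i=\dim\mathcal P_i$ and $f_i=\dim\mathcal F_i$. Then for all $0\le i\le j\le n$, $$(p_j-p_i)+(f_i-f_j)\le j-i.$$ As a consequence, $\Delta[\mathcal C]\le\lfloor (n-2d+2)/2\rfloor$.
   Context: The coordinate order is fixed. Define $\mathcal P_0=\mathcal F_n=0$, $\mathcal P_n=\mathcal F_0=\mathcal C$, and for $1\le i\le n-1$, $\mathcal P_i=\{(c_1,\dots,c_i):(c_1,\dots,c_i,0,\dots,0)\in\mathcal C\}$ and $\mathcal F_i=\{(c_{i+1},\dots,c_n):(0,\dots,0,c_{i+1},\dots,c_n)\in\mathcal C\}$. $\mathcal C$ is formally self-orthogonal if there is an $n$-tuple $\mathbf x$ of nonzero elements of $\mathbf F_q$ with $\mathcal C\subseteq\mathbf x*\mathcal C^\perp$, where $*$ is coordinate-wise multiplication. Set $\Delta_i=p_i+f_i$ and $\Delta(\mathcal C)=\min_{0\le i\le n}\Delta_i$. Then $\Delta[\mathcal C]$ is the maximum of $\Delta(\mathcal C')$ over all codes $\mathcal C'$ obtained from $\mathcal C$ by permuting coordinates. *)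

From HB Require Import structures.
From mathcomp Require Import all_boot all_order all_algebra all_fingroup.
Set Implicit Arguments. Unset Strict Implicit. Unset Printing Implicit Defensive.
Import GRing.Theory.
Local Open Scope ring_scope.

Section Codes.
Variables (F : finFieldType) (n : nat).
Implicit Types (C : {vspace 'rV[F]_n}) (c x y : 'rV[F]_n).

Definition wt c : nat := #|[set j : 'I_n | c 0 j != 0]|.

Definition is_min_dist C (d : nat) : Prop :=
  (exists2 c, c \in C & (c != 0) && (wt c == d)) /\
  (forall c, c \in C -> c != 0 -> (d <= wt c)%N).

Definition dot x y : F := \sum_(j < n) x 0 j * y 0 j.
Definition in_dual C y : Prop := forall c, c \in C -> dot c y = 0.

Definition cwmul x y : 'rV[F]_n := \row_j (x 0 j * y 0 j).

Definition formally_self_orthogonal C : Prop :=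
  exists2 x : 'rV[F]_n, (forall j, x 0 j != 0) &
    forall c, c \in C -> exists2 y, in_dual C y & c = cwmul x y.

(* embedding F^i -> F^n : (c_1..c_i) |-> (c_1,..,c_i,0,..,0) *)
Definition prefix_mx (i : nat) : 'M[F]_(i, n) :=
  \matrix_(a < i, b < n) ((val a == val b)%N)%:R.
(* embedding F^(n-i) -> F^n : (c_{i+1}..c_n) |-> (0,..,0,c_{i+1},..,c_n) *)
Definition suffix_mx (i : nat) : 'M[F]_(n - i, n) :=
  \matrix_(a < n - i, b < n) ((i + val a == val b)%N)%:R.

Definition Pcode C (i : nat) : {vspace 'rV[F]_i} :=
  (linfun (mulmxr (prefix_mx i)) @^-1: C)%VS.
Definition Fcode C (i : nat) : {vspace 'rV[F]_(n - i)} :=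
  (linfun (mulmxr (suffix_mx i)) @^-1: C)%VS.

Definition pdim C i : nat := \dim (Pcode C i).
Definition fdim C i : nat := \dim (Fcode C i).

Definition Delta C : nat :=
  \big[minn/(pdim C 0 + fdim C 0)%N]_(i < n.+1) (pdim C i + fdim C i)%N.

Definition permute_code C (s : 'S_n) : {vspace 'rV[F]_n} :=
  (linfun (mulmxr (perm_mx s)) @: C)%VS.

Definition DeltaMax C : nat := \max_(s : 'S_n) Delta (permute_code C s).

End Codes.

(* With z := x^-1, formal self-orthogonality says that C is totally isotropic
   for the weighted form <a, b>_z = sum_k a_k b_k z_k.  Write C_S for the
   codewords supported in S.  Restricting C_S to the coordinates in S :&: T has
   kernel C_(S :\: T), multiplying C_T by z on S :&: T has kernel C_(T :\: S),
   and the two images are orthogonal for the standard form inside the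
   #|S :&: T|-dimensional space of vectors supported in S :&: T.  Hence
   dim C_S + dim C_T <= dim C_(S :\: T) + dim C_(T :\: S) + #|S :&: T|, which for
   S = [0, j) and T = [i, n) is the inequality on p and f.  For i = d - 1 and
   j = n - d + 1 no nonzero codeword fits, so p_i = f_j = 0 and
   2 Delta(C) <= p_j + f_i <= n - 2d + 2; coordinate permutations preserve all
   hypotheses. *)

From HB Require Import structures.
From mathcomp Require Import all_boot all_order all_algebra all_fingroup.
From mathcomp Require Import zify.
Set Implicit Arguments. Unset Strict Implicit. Unset Printing Implicit Defensive.
Import Order.TTheory GRing.Theory.
Local Open Scope ring_scope.

Section Supports.
Variables (F : finFieldType) (n : nat).
Implicit Types (S T W : {set 'I_n}) (v w z : 'rV[F]_n) (D U V : {vspace 'rV[F]_n}).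

Definition cwmulL w : 'End('rV[F]_n) := linfun (mulmxr (diag_mx w)).

Lemma cwmulLE w v : cwmulL w v = cwmul w v.
Proof. by apply/rowP => k; rewrite lfunE /= mul_mx_diag !mxE mulrC. Qed.

Definition indicator S : 'rV[F]_n := \row_k (k \in S)%:R.

Lemma indicator_neq0 S k : (indicator S 0 k != 0) = (k \in S).
Proof. by rewrite mxE; case: (k \in S); rewrite ?oner_eq0 ?eqxx. Qed.

Definition supp_vs S : {vspace 'rV[F]_n} := lker (cwmulL (indicator (~: S))).

Lemma supp_vsP S v : reflect (forall k, k \notin S -> v 0 k = 0) (v \in supp_vs S).
Proof.
rewrite memv_ker cwmulLE; apply: (iffP eqP) => [v0 k kS | v0].
  by have := congr1 (fun u : 'rV[F]_n => u 0 k) v0; rewrite !mxE inE kS mul1r.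
apply/rowP => k; rewrite !mxE inE.
by case: (boolP (k \in S)) => kS; rewrite /= ?mul0r // v0 // mulr0.
Qed.

Lemma delta_mx_supp_vs S k : k \in S -> delta_mx 0 k \in supp_vs S.
Proof.
by move=> kS; apply/supp_vsP => j jS; rewrite mxE eqxx; case: eqP => // jk; rewrite jk kS in jS.
Qed.

Lemma supp_vs_span S : supp_vs S = span [seq delta_mx 0 k | k <- enum S].
Proof.
apply/eqP; rewrite eqEsubv; apply/andP; split.
  apply/subvP => v /supp_vsP v0; rewrite [v]row_sum_delta; apply: memv_suml => k _.
  have [kS|kS] := boolP (k \in S); last by rewrite v0 // scale0r mem0v.
  by rewrite memvZ // memv_span // map_f ?mem_enum.
by apply/span_subvP => _ /mapP[k kS ->]; rewrite mem_enum in kS; apply: delta_mx_supp_vs.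
Qed.

Lemma free_delta_mx (s : seq 'I_n) : uniq s -> free [seq delta_mx 0 k : 'rV[F]_n | k <- s].
Proof.
elim: s => [|k s IHs] /=; first by rewrite nil_free.
case/andP => ks /IHs free_s; rewrite free_cons free_s andbT.
have /span_subvP/subvP sub_supp : {subset [seq delta_mx 0 j | j <- s] <= supp_vs [set j in s]}.
  by move=> _ /mapP[j js ->]; apply: delta_mx_supp_vs; rewrite inE.
apply: contra ks => /sub_supp /supp_vsP dk; apply/contraT => kNs.
by have := dk k; rewrite inE kNs mxE !eqxx => /(_ isT)/eqP; rewrite oner_eq0.
Qed.

Lemma dim_supp_vs S : \dim (supp_vs S) = #|S|.
Proof. by rewrite supp_vs_span (eqnP (free_delta_mx (enum_uniq S))) size_map -cardE. Qed.

Lemma wt_supp_vs S v : v \in supp_vs S -> (wt v <= #|S|)%N.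
Proof.
move/supp_vsP => v0; apply/subset_leq_card/subsetP => k; rewrite inE.
by apply: contraR => kS; rewrite v0.
Qed.

Lemma wt_eq0 v : (wt v == 0%N) = (v == 0).
Proof.
rewrite cards_eq0; apply/eqP/eqP => [v0 | ->]; last by apply/setP => k; rewrite !inE mxE eqxx.
by apply/rowP => k; apply/eqP; move/setP/(_ k): v0; rewrite !inE mxE => /negbFE.
Qed.

Lemma dim_cap_supp_vs_eq0 D S d :
  (forall v, v \in D -> v != 0 -> (d <= wt v)%N) -> (#|S| < d)%N ->
  \dim (D :&: supp_vs S) = 0%N.
Proof.
move=> Dwt Sd; apply/eqP; rewrite dimv_eq0 -subv0; apply/subvP => v.
rewrite memv_cap memv0 => /andP[vD vS]; apply/contraT => v0.
by have := leq_trans (Dwt v vD v0) (wt_supp_vs vS); rewrite leqNgt Sd.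
Qed.

Definition basis_mx U : 'M[F]_(\dim U, n) := \matrix_(t < \dim U) (vbasis U)`_t.

Lemma rank_basis_mx U : \rank (basis_mx U) = \dim U.
Proof.
apply/eqP/inj_row_free => c; rewrite mulmx_sum_row => c0; apply/rowP => t; rewrite mxE.
move/freeP: (basis_free (vbasisP U)) => /(_ (fun t => c 0 t)); apply.
by rewrite -[RHS]c0; apply: eq_bigr => s _; rewrite rowK.
Qed.

Lemma row_basis_mx U t : row t (basis_mx U) \in U.
Proof. by rewrite rowK vbasis_mem // mem_nth // size_tuple. Qed.

Lemma dot_orthogonal_dim U V :
  (forall u v, u \in U -> v \in V -> dot u v = 0) -> (\dim U + \dim V <= n)%N.
Proof.
move=> UV.
have UV0 : basis_mx U *m (basis_mx V)^T = 0.
  apply/matrixP => s t; rewrite !mxE -[RHS](UV _ _ (row_basis_mx s) (row_basis_mx t)).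
  by apply: eq_bigr => k _; rewrite !mxE.
have : (\rank (basis_mx U) <= \rank (kermx (basis_mx V)^T))%N.
  by apply: mxrankS; rewrite sub_kermx UV0.
rewrite mxrank_ker mxrank_tr !rank_basis_mx.
have := rank_leq_col (basis_mx V); rewrite rank_basis_mx; lia.
Qed.

Lemma dotDr u v v' : dot u (v + v') = dot u v + dot u v'.
Proof. by rewrite /dot -big_split; apply: eq_bigr => k _; rewrite mxE mulrDr. Qed.

Lemma dot_supp_vsC W u v : u \in supp_vs W -> v \in supp_vs (~: W) -> dot u v = 0.
Proof.
move=> /supp_vsP u0 /supp_vsP v0; apply: big1 => k _.
have [kW|kW] := boolP (k \in W); last by rewrite u0 ?mul0r.
by rewrite v0 ?mulr0 // inE kW.
Qed.

Lemma supp_vs_capC W : (supp_vs W :&: supp_vs (~: W) = 0)%VS.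
Proof.
apply/eqP; rewrite -subv0; apply/subvP => v; rewrite memv_cap memv0.
case/andP=> /supp_vsP v1 /supp_vsP v2; apply/eqP/rowP => k; rewrite mxE.
by have [kW|kW] := boolP (k \in W); [apply: v2; rewrite inE kW | apply: v1].
Qed.

Lemma dot_orthogonal_supp_dim W U V :
  (U <= supp_vs W)%VS -> (V <= supp_vs W)%VS ->
  (forall u v, u \in U -> v \in V -> dot u v = 0) -> (\dim U + \dim V <= #|W|)%N.
Proof.
move=> UW VW UV.
have UVC : forall u x, u \in U -> x \in (V + supp_vs (~: W))%VS -> dot u x = 0.
  move=> u _ uU /memv_addP[v vV [y yC ->]].
  by rewrite dotDr UV // (dot_supp_vsC (subvP UW _ uU) yC) addr0.
have VC : (V :&: supp_vs (~: W) = 0)%VS.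
  by apply/eqP; rewrite -subv0 -(supp_vs_capC W) capvS.
have := dot_orthogonal_dim UVC; rewrite dimv_disjoint_sum // dim_supp_vs.
have := cardsC W; rewrite card_ord; lia.
Qed.

Definition self_orthogonal_wrt z D :=
  forall a b, a \in D -> b \in D -> dot a (cwmul z b) = 0.

Lemma dim_cap_supp_vs_cwmulL D S W w : (forall k, (w 0 k != 0) = (k \in W)) ->
  (\dim (D :&: supp_vs S) <=
     \dim (D :&: supp_vs (S :\: W)) + \dim (cwmulL w @: (D :&: supp_vs S)))%N.
Proof.
move=> wW; rewrite -(limg_ker_dim (cwmulL w) (D :&: supp_vs S)) leq_add2r.
apply/dimvS/subvP => v; rewrite !memv_cap memv_ker cwmulLE.
case/andP=> /andP[vD /supp_vsP vS] /eqP/rowP wv0; rewrite vD; apply/supp_vsP => k.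
rewrite inE negb_and negbK => /orP[kW | kS]; last exact: vS.
have wk : w 0 k != 0 by rewrite wW.
by move: (wv0 k); rewrite !mxE => /eqP; rewrite mulf_eq0 (negbTE wk) => /eqP.
Qed.

Lemma cwmulL_image_supp_vs W w U : (forall k, (w 0 k != 0) = (k \in W)) ->
  (cwmulL w @: U <= supp_vs W)%VS.
Proof.
move=> wW; apply/subvP => _ /memv_imgP[v _ ->]; apply/supp_vsP => k kW.
by move: kW; rewrite cwmulLE mxE -wW negbK => /eqP ->; rewrite mul0r.
Qed.

Lemma dim_cap_supp_vs_exchange D z S T :
  (forall k, z 0 k != 0) -> self_orthogonal_wrt z D ->
  (\dim (D :&: supp_vs S) + \dim (D :&: supp_vs T) <=
     \dim (D :&: supp_vs (S :\: T)) + \dim (D :&: supp_vs (T :\: S)) + #|S :&: T|)%N.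
Proof.
move=> z0 Dz; set W := S :&: T.
have piW := indicator_neq0 W.
have sigmaW k : (cwmul z (indicator W) 0 k != 0) = (k \in W).
  by rewrite [cwmul _ _ 0 k]mxE mulf_eq0 negb_or z0 piW.
have pi_sigma_orth u v : u \in (cwmulL (indicator W) @: (D :&: supp_vs S))%VS ->
    v \in (cwmulL (cwmul z (indicator W)) @: (D :&: supp_vs T))%VS -> dot u v = 0.
  case/memv_imgP=> a; rewrite memv_cap => /andP[aD /supp_vsP aS] ->.
  case/memv_imgP=> b; rewrite memv_cap => /andP[bD /supp_vsP bT] ->.
  rewrite !cwmulLE -(Dz a b aD bD); apply: eq_bigr => k _; rewrite !mxE inE.
  have [kS|kS] := boolP (k \in S); last by rewrite aS ?mul0r ?mulr0.
  have [kT|kT] := boolP (k \in T); last by rewrite bT ?mul0r ?mulr0.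
  by rewrite !mulr1 mul1r.
have := dot_orthogonal_supp_dim (cwmulL_image_supp_vs _ piW) (cwmulL_image_supp_vs _ sigmaW)
  pi_sigma_orth.
have := dim_cap_supp_vs_cwmulL D S piW; have := dim_cap_supp_vs_cwmulL D T sigmaW.
rewrite /W !setDIr !setDv set0U setU0 => hT hS horth.
by apply: leq_trans (leq_add hS hT) _; rewrite addnACA leq_add2l.
Qed.

End Supports.

Section Coordinates.
Variables (F : finFieldType) (n : nat).

Definition embed_mx m (g : 'I_m -> 'I_n) : 'M[F]_(m, n) := \matrix_(a, b) (g a == b)%:R.

Definition embedL m (g : 'I_m -> 'I_n) : 'Hom('rV[F]_m, 'rV[F]_n) :=
  linfun (mulmxr (embed_mx g)).

Lemma embedLE m (g : 'I_m -> 'I_n) u b : embedL g u 0 b = \sum_(a | g a == b) u 0 a.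
Proof.
rewrite lfunE /= mxE [RHS]big_mkcond; apply: eq_bigr => a _; rewrite mxE.
by case: (_ == _); rewrite ?mulr1 ?mulr0.
Qed.

Section Injective.
Variables (m : nat) (g : 'I_m -> 'I_n).
Hypothesis g_inj : injective g.

Lemma embedL_in u a : embedL g u 0 (g a) = u 0 a.
Proof. by rewrite embedLE (big_pred1 a) // => a'; rewrite /= (inj_eq g_inj). Qed.

Lemma embedL_out u b : b \notin [set g a | a : 'I_m] -> embedL g u 0 b = 0.
Proof.
move=> bg; rewrite embedLE big_pred0 // => a.
by apply: contraNF bg => /eqP <-; apply/imsetP; exists a.
Qed.

Lemma lker_embedL : lker (embedL g) = 0%VS.
Proof.
apply/eqP/lker0P => u u' /rowP e; apply/rowP => a.
by have := e (g a); rewrite !embedL_in.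
Qed.

Lemma limg_embedL : limg (embedL g) = supp_vs F [set g a | a : 'I_m].
Proof.
apply/eqP; rewrite eqEsubv; apply/andP; split.
  by apply/subvP => _ /memv_imgP[u _ ->]; apply/supp_vsP => b; apply: embedL_out.
apply/subvP => v /supp_vsP v0; apply/memv_imgP; exists (\row_a v 0 (g a)); first exact: memvf.
apply/rowP => b; have [/imsetP[a _ ->]|bg] := boolP (b \in [set g a | a : 'I_m]).
  by rewrite embedL_in mxE.
by rewrite embedL_out // v0.
Qed.

End Injective.

Lemma dim_lpreim (aT rT : vectType F) (f : 'Hom(aT, rT)) (U : {vspace rT}) :
  lker f = 0%VS -> \dim (f @^-1: U) = \dim (U :&: limg f).
Proof.
move=> f_inj; rewrite -(@limg_dim_eq _ _ _ f); last by rewrite f_inj capv0.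
by rewrite -lpreim_cap_limg lpreimK // capvSr.
Qed.

End Coordinates.

Section CodeDimensions.
Variables (F : finFieldType) (n : nat).
Implicit Types (C : {vspace 'rV[F]_n}) (z : 'rV[F]_n).

Lemma card_ord_range i j : (j <= n)%N -> #|[set k : 'I_n | i <= k < j]%N| = (j - i)%N.
Proof.
move=> jn; rewrite -sum1_card -[RHS]muln1 -sum_nat_const_nat.
rewrite (big_nat_widen _ _ _ _ _ jn) (big_nat_widenl _ _ _ _ _ (leq0n i)) big_mkord.
by apply: eq_bigl => k; rewrite inE andbC.
Qed.

Lemma card_ord_lt i : (i <= n)%N -> #|[set k : 'I_n | k < i]%N| = i.
Proof. by move=> hi; rewrite -[RHS]subn0 -card_ord_range. Qed.

Lemma card_ord_ge i : #|[set k : 'I_n | i <= k]%N| = (n - i)%N.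
Proof.
by rewrite -card_ord_range //; apply: eq_card => k; rewrite !inE ltn_ord andbT.
Qed.

Lemma tail_ord_subproof i (a : 'I_(n - i)) : (i + a < n)%N.
Proof. by have := ltn_ord a; lia. Qed.

Definition tail_ord i (a : 'I_(n - i)) : 'I_n := Ordinal (tail_ord_subproof a).

Lemma pdim_supp_vs C i : (i <= n)%N ->
  pdim C i = \dim (C :&: supp_vs F [set k : 'I_n | k < i]%N).
Proof.
move=> hi.
have widen_inj : injective (widen_ord hi) by move=> a b /(congr1 val) ab; apply: val_inj.
rewrite /pdim /Pcode.
have -> : prefix_mx F n i = embed_mx F (widen_ord hi) by apply/matrixP => a b; rewrite !mxE.
rewrite -/(embedL _ _) dim_lpreim ?lker_embedL // limg_embedL //.
congr (\dim (_ :&: supp_vs _ _)); apply/setP => k; rewrite inE.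
apply/imsetP/idP => [[a _ ->] | ki]; first exact: (ltn_ord a).
by exists (Ordinal ki) => //; apply: val_inj.
Qed.

Lemma fdim_supp_vs C i : fdim C i = \dim (C :&: supp_vs F [set k : 'I_n | i <= k]%N).
Proof.
have tail_inj : injective (@tail_ord i) by move=> a b /(congr1 val)/addnI ab; apply: val_inj.
rewrite /fdim /Fcode.
have -> : suffix_mx F n i = embed_mx F (@tail_ord i) by apply/matrixP => a b; rewrite !mxE.
rewrite -/(embedL _ _) dim_lpreim ?lker_embedL // limg_embedL //.
congr (\dim (_ :&: supp_vs _ _)); apply/setP => k; rewrite inE.
apply/imsetP/idP => [[a _ ->] | ik]; first exact: leq_addr.
have ki : (k - i < n - i)%N by have := ltn_ord k; lia.
by exists (Ordinal ki) => //; apply: val_inj => /=; rewrite subnKC.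
Qed.

Lemma pdim_fdim_exchange C z i j :
  (forall k, z 0 k != 0) -> self_orthogonal_wrt z C -> (i <= j)%N -> (j <= n)%N ->
  (pdim C j + fdim C i <= pdim C i + fdim C j + (j - i))%N.
Proof.
move=> z0 Cz ij jn.
have := dim_cap_supp_vs_exchange [set k : 'I_n | k < j]%N [set k : 'I_n | i <= k]%N z0 Cz.
rewrite !pdim_supp_vs ?(leq_trans ij) // !fdim_supp_vs.
have -> : [set k : 'I_n | k < j]%N :&: [set k : 'I_n | i <= k]%N = [set k : 'I_n | i <= k < j]%N.
  by apply/setP => k; rewrite !inE andbC.
have -> : [set k : 'I_n | k < j]%N :\: [set k : 'I_n | i <= k]%N = [set k : 'I_n | k < i]%N.
  by apply/setP => k; rewrite !inE -ltnNge andb_idr // => /leq_trans; apply.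
have -> : [set k : 'I_n | i <= k]%N :\: [set k : 'I_n | k < j]%N = [set k : 'I_n | j <= k]%N.
  by apply/setP => k; rewrite !inE -leqNgt andb_idr // => /(leq_trans ij).
by rewrite card_ord_range // addnAC.
Qed.

Lemma Delta_le C k : (k <= n)%N -> (Delta C <= pdim C k + fdim C k)%N.
Proof.
move=> kn; rewrite /Delta -minEnat.
exact: (bigmin_le _ (Ordinal (kn : (k < n.+1)%N)) (fun i : 'I_n.+1 => pdim C i + fdim C i)%N).
Qed.

Lemma Delta_le_half C z d :
  (forall k, z 0 k != 0) -> self_orthogonal_wrt z C ->
  (forall c, c \in C -> c != 0 -> (d <= wt c)%N) -> (0 < d)%N -> (2 * d <= n + 1)%N ->
  (Delta C <= (n + 2 - 2 * d) %/ 2)%N.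
Proof.
move=> z0 Cz Cwt d_gt0 dn.
have ij : (d.-1 <= n - d.-1)%N by lia.
have jn : (n - d.-1 <= n)%N := leq_subr _ _.
have p0 : pdim C d.-1 = 0%N.
  rewrite pdim_supp_vs ?(leq_trans ij) //.
  by apply: (dim_cap_supp_vs_eq0 Cwt); rewrite card_ord_lt; lia.
have f0 : fdim C (n - d.-1) = 0%N.
  by rewrite fdim_supp_vs; apply: (dim_cap_supp_vs_eq0 Cwt); rewrite card_ord_ge; lia.
have := pdim_fdim_exchange z0 Cz ij jn.
have := Delta_le C (leq_trans ij jn); have := Delta_le C jn.
rewrite p0 f0 leq_divRL //; lia.
Qed.

End CodeDimensions.

Section Permutations.
Variables (F : finFieldType) (n : nat).
Implicit Types (C : {vspace 'rV[F]_n}) (s : 'S_n) (a z : 'rV[F]_n).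

Lemma mul_perm_mx_entry s a k : (a *m perm_mx s) 0 k = a 0 (s^-1 k)%g.
Proof. by rewrite -[s]invgK -col_permE mxE invgK. Qed.

Lemma wt_mul_perm_mx s a : wt (a *m perm_mx s) = wt a.
Proof.
rewrite /wt -(card_preimset [set k | a 0 k != 0] (@perm_inj _ s^-1)%g).
by apply: eq_card => k; rewrite !inE mul_perm_mx_entry.
Qed.

Lemma permute_codeP C s v :
  reflect (exists2 a, a \in C & v = a *m perm_mx s) (v \in permute_code C s).
Proof.
by apply: (iffP memv_imgP) => -[a aC ->]; exists a; rewrite ?lfunE.
Qed.

Lemma self_orthogonal_wrt_permute_code z C s : self_orthogonal_wrt z C ->
  self_orthogonal_wrt (z *m perm_mx s) (permute_code C s).
Proof.
move=> Cz _ _ /permute_codeP[a aC ->] /permute_codeP[b bC ->].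
rewrite -(Cz a b aC bC) /dot (reindex_inj (@perm_inj _ s)) /=.
apply: eq_bigr => k _.
by rewrite [cwmul _ _ _ _]mxE [cwmul _ _ _ _]mxE !mul_perm_mx_entry permK.
Qed.

Lemma min_wt_permute_code C s d :
  (forall c, c \in C -> c != 0 -> (d <= wt c)%N) ->
  forall v, v \in permute_code C s -> v != 0 -> (d <= wt v)%N.
Proof.
move=> Cwt _ /permute_codeP[a aC ->] a_neq0; rewrite wt_mul_perm_mx Cwt //.
by apply: contraNneq a_neq0 => ->; rewrite mul0mx.
Qed.

End Permutations.

Lemma formally_self_orthogonal_wrt (F : finFieldType) n (C : {vspace 'rV[F]_n}) :
  formally_self_orthogonal C ->
  exists2 z : 'rV[F]_n, (forall k, z 0 k != 0) & self_orthogonal_wrt z C.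
Proof.
case=> x x_neq0 Cx; exists (\row_k (x 0 k)^-1) => [k | a b aC bC].
  by rewrite mxE invr_eq0.
have [y y_dual ->] := Cx b bC; rewrite -[RHS](y_dual a aC).
by congr dot; apply/rowP => k; rewrite !mxE mulrA mulVf ?mul1r.
Qed.

Unset Implicit Arguments.
Set Strict Implicit.

Theorem proposition4p4 (F : finFieldType) (n d : nat) (C : {vspace 'rV[F]_n}) :
  C != 0%VS ->
  formally_self_orthogonal C ->
  is_min_dist C d ->
  (2 * d <= n + 1)%N ->
  (forall i j : nat, (i <= j)%N -> (j <= n)%N ->
     ((pdim C j)%:Z - (pdim C i)%:Z) + ((fdim C i)%:Z - (fdim C j)%:Z)
       <= j%:Z - i%:Z)
  /\ (DeltaMax C <= (n + 2 - 2 * d) %/ 2)%N.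
Proof.
move=> _ /formally_self_orthogonal_wrt[z z_neq0 Cz] [[c cC /andP[c_neq0 /eqP wt_c]] Cwt] dn.
split=> [i j ij jn | ].
  by have := pdim_fdim_exchange z_neq0 Cz ij jn; lia.
have d_gt0 : (0 < d)%N by rewrite -wt_c lt0n wt_eq0.
apply/bigmax_leqP => s _; apply: (Delta_le_half (z := z *m perm_mx s)) d_gt0 dn.
- by move=> k; rewrite mul_perm_mx_entry.
- exact: self_orthogonal_wrt_permute_code.
- exact: min_wt_permute_code.
Qed.
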